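(* Let $m\ge6$ be even, $t=m/2$, and $s$ an integer with $2\le s\le 2^{t-1}$. Let $E_1,\dots,E_\alpha$ be a partial spread in $\mathbb{F}_2^m$ and $A,B\subseteq\{1,\dots,\alpha\}$ with $|A|=|B|=s$ and $|A\cap B|=1$. Let $f=\sum_{i\in A}f_i$, $g=\sum_{i\in B}f_i$, and $F=\{f,g,f+g\}$. Then for every nonzero $\mathbf{h}\in\mathbb{F}_2^m$ and all $f_1,f_2\in F$ with $f_1\neq f_2$, \[\widehat{f_1}(\mathbf{h})+\widehat{f_2}(\mathbf{h})-\widehat{f_1+f_2}(\mathbf{0})\neq 2^m\quad\text{and}\quad \widehat{f_1}(\mathbf{h})+\widehat{f_2}(\mathbf{0})-\widehat{f_1+f_2}(\mathbf{h})\neq 2^m.\]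
   Context: A partial spread in $\mathbb{F}_2^m$ ($m=2t$) is a set of subspaces $E_1,\dots,E_\alpha$ of $\mathbb{F}_2^m$, each of dimension $t$, with $E_i\cap E_j=\{\mathbf{0}\}$ for $i\ne j$. $f_i:\mathbb{F}_2^m\to\mathbb{F}_2$ is the indicator function of $E_i\setminus\{\mathbf{0}\}$; sums of Boolean functions are mod 2. For a Boolean function $h$, $\widehat{h}(\mathbf{w})=\sum_{\mathbf{x}\in\mathbb{F}_2^m}(-1)^{h(\mathbf{x})+\mathbf{w}\cdot\mathbf{x}}$ with the standard inner product. *)

From HB Require Import structures.
From mathcomp Require Import all_boot all_order all_algebra all_fingroup.
Set Implicit Arguments. Unset Strict Implicit. Unset Printing Implicit Defensive.
Import GRing.Theory Num.Theory.
Local Open Scope ring_scope.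

(* Vectors of F_2^m are row vectors 'rV['F_2]_m; subspaces are represented
   by (row spaces of) square matrices 'M['F_2]_m. *)
Notation vec m := 'rV['F_2]_m.

Definition dotF2 (m : nat) (w x : vec m) : 'F_2 := (w *m x^T) 0 0.

Definition sgnF2 (b : 'F_2) : int := if b == 0 then 1 else -1.

Definition walsh (m : nat) (h : vec m -> 'F_2) (w : vec m) : int :=
  \sum_(x : vec m) sgnF2 (h x + dotF2 w x).

Definition partial_spread (m t alpha : nat) (E : 'I_alpha -> 'M['F_2]_m) : Prop :=
  (forall i, \rank (E i) = t) /\
  (forall i j, i != j -> (E i :&: E j)%MS = 0).

Definition ind_nz (m : nat) (E : 'M['F_2]_m) (x : vec m) : 'F_2 :=
  if (x <= E)%MS && (x != 0) then 1 else 0.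

Definition sum_ind (m alpha : nat) (E : 'I_alpha -> 'M['F_2]_m) (A : {set 'I_alpha})
  (x : vec m) : 'F_2 := \sum_(i in A) ind_nz (E i) x.

Definition addF (m : nat) (f g : vec m -> 'F_2) : vec m -> 'F_2 := fun x => f x + g x.

From HB Require Import structures.
From mathcomp Require Import all_boot all_order all_algebra all_fingroup.
From mathcomp Require Import mxabelem zify ring.

(* Over a partial spread of t-dimensional subspaces E_i, a character sum over a subspace E
   vanishes or equals |E|, so writing (-1)^(f_S) = 1 - 2 [x in some E_i \ 0] gives
   \hat f_S(w) = 2 |S| mod 2^(t+1) at every w, where f_S := \sum_(i in S) f_i.
   The members of F are f_A, f_B and f_A + f_B = f_(A Δ B); for distinct X, Y among A, B,
   A Δ B, the combination \hat f_X + \hat f_Y - \hat f_(X Δ Y) is 4 |X ∩ Y| mod 2^(t+1),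
   with |X ∩ Y| in {1, s - 1} strictly between 0 and 2^(t-1). It is therefore not divisible
   by 2^(t+1), whereas 2^m is. *)
Set Implicit Arguments. Unset Strict Implicit. Unset Printing Implicit Defensive.
Import GRing.Theory Num.Theory.
Local Open Scope ring_scope.

Lemma F2_cases (a : 'F_2) : a = 0 \/ a = 1.
Proof. by case: a => [[|[|n]] //= Hn]; [left|right]; apply/val_inj. Qed.

Lemma sgnF2D (a b : 'F_2) : sgnF2 (a + b) = sgnF2 a * sgnF2 b.
Proof. by case: (F2_cases a) => ->; case: (F2_cases b) => ->. Qed.

Lemma dotF2D (m : nat) (w x y : vec m) : dotF2 w (x + y) = dotF2 w x + dotF2 w y.
Proof. by rewrite /dotF2 linearD /= mulmxDr mxE. Qed.

Lemma dotF20 (m : nat) (w : vec m) : dotF2 w 0 = 0.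
Proof. by rewrite /dotF2 trmx0 mulmx0 mxE. Qed.

Lemma eq_walsh (m : nat) (f g : vec m -> 'F_2) w : f =1 g -> walsh f w = walsh g w.
Proof. by move=> fg; apply: eq_bigr => x _; rewrite fg. Qed.

Definition charsum (m : nat) (E : 'M['F_2]_m) (w : vec m) : int :=
  \sum_(x in rowg E) sgnF2 (dotF2 w x).

Lemma charsum_eq0_or_exp (m : nat) (E : 'M['F_2]_m) (w : vec m) :
  charsum E w = 0 \/ charsum E w = (2 ^ \rank E)%:Z.
Proof.
have [e /andP[eE /eqP we1] | w_orth] :=
  pickP [pred e | (e \in rowg E) && (dotF2 w e == 1)].
  left; suff: charsum E w = - charsum E w by lia.
  rewrite /charsum {1}(reindex_inj (addIr e)) -sumrN /=.
  apply: eq_big => [x | x _]; last by rewrite dotF2D we1 sgnF2D mulrN1.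
  rewrite !mem_rowg in eE *; apply/idP/idP => [xeE | xE]; last exact: addmx_sub.
  by rewrite -[x](addrK e) addmx_sub ?eqmx_opp.
right; rewrite /charsum (eq_bigr (fun _ => 1)) => [|x xE].
  by rewrite sumr_const card_rowg card_Fp // -natz.
by have := w_orth x; rewrite /= xE; case: (F2_cases (dotF2 w x)) => ->.
Qed.

Lemma dvdz_charsum (m : nat) (E : 'M['F_2]_m) (w : vec m) :
  ((2 ^ \rank E)%:Z %| charsum E w)%Z.
Proof. by case: (charsum_eq0_or_exp E w) => ->; rewrite ?dvdz0 ?dvdzz. Qed.

Definition in_punct (m : nat) (E : 'M['F_2]_m) (x : vec m) : bool :=
  (x <= E)%MS && (x != 0).

Lemma ind_nzE (m : nat) (E : 'M['F_2]_m) x : ind_nz E x = (in_punct E x)%:R.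
Proof. by rewrite /ind_nz /in_punct; case: (_ && _). Qed.

Lemma sgnF2_nat (b : bool) : sgnF2 b%:R = 1 - 2 * b%:R.
Proof. by case: b. Qed.

Lemma charsum_punct (m : nat) (E : 'M['F_2]_m) (w : vec m) :
  \sum_(x : vec m) (in_punct E x)%:R * sgnF2 (dotF2 w x) = charsum E w - 1.
Proof.
rewrite /charsum [in RHS](bigD1 0) ?mem_rowg ?sub0mx //= dotF20 addrC addrK.
rewrite [RHS]big_mkcond /=; apply: eq_bigr => x _.
by rewrite mem_rowg /in_punct; case: (_ && _); rewrite ?mul1r ?mul0r.
Qed.

Lemma sum_bool_uniq (R : nzSemiRingType) (I : finType) (b : pred I) (S : {set I}) :
  (forall i j, b i -> b j -> i = j) ->
  \sum_(i in S) (b i)%:R = [exists i in S, b i]%:R :> R.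
Proof.
move=> b_uniq; have [i /andP[iS bi] | none] := pickP [pred i | (i \in S) && b i].
  rewrite (bigD1 i iS) big1 /= => [|j /andP[_ ji]].
    by rewrite bi addr0; case: existsP => // -[]; exists i; rewrite iS.
  by case: (boolP (b j)) => // bj; case/eqP: ji; apply: b_uniq.
rewrite big1 => [|j jS]; last by have := none j; rewrite /= jS /= => ->.
by case: existsP => // -[j /andP[jS bj]]; have := none j; rewrite /= jS bj.
Qed.

Definition setSD (T : finType) (A B : {set T}) : {set T} := (A :\: B) :|: (B :\: A).

Lemma setI_SDl (T : finType) (A B : {set T}) : A :&: setSD A B = A :\: B.
Proof. by apply/setP => i; rewrite !inE; case: (i \in A); case: (i \in B). Qed.

Lemma setSDC (T : finType) (A B : {set T}) : setSD A B = setSD B A.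
Proof. exact: setUC. Qed.

Lemma disjoint_setDD (T : finType) (A B : {set T}) : [disjoint A :\: B & B :\: A].
Proof.
by rewrite -setI_eq0; apply/eqP/setP => i; rewrite !inE; case: (i \in A); case: (i \in B).
Qed.

Lemma cardsSD (T : finType) (A B : {set T}) :
  (#|setSD A B| + 2 * #|A :&: B| = #|A| + #|B|)%N.
Proof.
rewrite cardsU (disjoint_setI0 (disjoint_setDD A B)) cards0 subn0.
by rewrite -(cardsID B A) -(cardsID A B) setIC; lia.
Qed.

Lemma big_setSD_pchar2 (R : nzRingType) (I : finType) (A B : {set I}) (F : I -> R) :
  2 \in [pchar R] ->
  \sum_(i in A) F i + \sum_(i in B) F i = \sum_(i in setSD A B) F i.
Proof.
move=> pchar2; rewrite (big_setID B) [X in _ + X](big_setID A) /= setIC.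
rewrite [RHS](eq_bigl [predU A :\: B & B :\: A]) => [|i]; last by rewrite !inE.
rewrite bigU ?disjoint_setDD //=.
by rewrite addrCA !addrA addrr_pchar2 // add0r.
Qed.

Lemma sum_indSD (m alpha : nat) (E : 'I_alpha -> 'M['F_2]_m) (A B : {set 'I_alpha}) :
  addF (sum_ind E A) (sum_ind E B) =1 sum_ind E (setSD A B).
Proof. by move=> x; apply: big_setSD_pchar2; apply: pchar_Fp. Qed.

Section PartialSpread.

Variables (m alpha t : nat) (E : 'I_alpha -> 'M['F_2]_m).
Hypothesis E_rank : forall i, \rank (E i) = t.
Hypothesis E_disj : forall i j, i != j -> (E i :&: E j)%MS = 0.

Lemma in_punct_uniq x i j : in_punct (E i) x -> in_punct (E j) x -> i = j.
Proof.
move=> /andP[xEi x0] /andP[xEj _]; apply/eqP; apply: contraNT x0 => ij.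
by rewrite -submx0 -(E_disj ij) sub_capmx xEi.
Qed.

Lemma sgnF2_sum_ind S x :
  sgnF2 (sum_ind E S x) = 1 - 2 * \sum_(i in S) (in_punct (E i) x)%:R.
Proof.
have uniq := @in_punct_uniq x.
rewrite /sum_ind (eq_bigr _ (fun i _ => ind_nzE (E i) x)).
by rewrite !sum_bool_uniq // sgnF2_nat.
Qed.

Lemma walsh_sum_ind S w :
  walsh (sum_ind E S) w = charsum 1%:M w - 2 * \sum_(i in S) (charsum (E i) w - 1).
Proof.
rewrite /walsh; under eq_bigr => x _ do rewrite sgnF2D sgnF2_sum_ind mulrBl mul1r.
rewrite sumrB; congr (_ - _).
  by rewrite /charsum rowg1; apply: eq_bigl => x; rewrite inE.
under eq_bigr => x _ do rewrite -mulrA mulr_suml.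
rewrite -mulr_sumr exchange_big; congr (_ * _).
by apply: eq_bigr => i _; apply: charsum_punct.
Qed.

Hypothesis t_lt_m : (t < m)%N.

Lemma walsh_sum_ind_mod S w :
  ((2 ^ t.+1)%:Z %| walsh (sum_ind E S) w - 2 * #|S|%:Z)%Z.
Proof.
have -> : walsh (sum_ind E S) w - 2 * #|S|%:Z =
    charsum 1%:M w - 2 * \sum_(i in S) charsum (E i) w.
  by rewrite walsh_sum_ind sumrB sumr_const -natz; ring.
apply: rpredB.
  apply: dvdz_trans (dvdz_charsum _ _); rewrite mxrank1; exact: dvdn_exp2l.
rewrite expnS PoszM mulr_sumr; apply: rpred_sum => i _.
by rewrite dvdz_mul2l // -(E_rank i) dvdz_charsum.
Qed.

Lemma walsh_addF_sum_ind_neq X Y F1 F2 w1 w2 w3 :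
  F1 =1 sum_ind E X -> F2 =1 sum_ind E Y -> (0 < #|X :&: Y| < 2 ^ t.-1)%N ->
  walsh F1 w1 + walsh F2 w2 - walsh (addF F1 F2) w3 != (2 ^ m)%:Z.
Proof.
move=> F1X F2Y /andP[XY_gt0 XY_lt]; apply/eqP => walsh_eq.
have F12 : addF F1 F2 =1 sum_ind E (setSD X Y).
  by move=> x; rewrite /addF F1X F2Y; apply: sum_indSD.
rewrite (eq_walsh _ F1X) (eq_walsh _ F2Y) (eq_walsh _ F12) in walsh_eq.
have t_gt0 : (0 < t)%N.
  by apply: contraTT XY_lt; rewrite -eqn0Ngt => /eqP ->; rewrite ltnNge XY_gt0.
have : ((2 ^ t.+1)%:Z %| Posz (4 * #|X :&: Y|)%N)%Z.
  have cardXY := cardsSD X Y.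
  have -> : Posz (4 * #|X :&: Y|)%N = (2 ^ m)%:Z
      - ((walsh (sum_ind E X) w1 - 2 * #|X|%:Z) + (walsh (sum_ind E Y) w2 - 2 * #|Y|%:Z)
         - (walsh (sum_ind E (setSD X Y)) w3 - 2 * #|setSD X Y|%:Z)) by lia.
  apply: rpredB; first exact: dvdn_exp2l.
  by apply: rpredB; first apply: rpredD; apply: walsh_sum_ind_mod.
have -> : (2 ^ t.+1 = 2 ^ t.-1 * 4)%N by rewrite -[4%N]/(2 ^ 2)%N -expnD addn2 prednK.
rewrite dvdzE /= [(4 * _)%N]mulnC dvdn_pmul2r //.
by move/(dvdn_leq XY_gt0); rewrite leqNgt XY_lt.
Qed.

End PartialSpread.

Theorem lemma6 (m t s alpha : nat) (E : 'I_alpha -> 'M['F_2]_m)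
  (A B : {set 'I_alpha}) :
  (6 <= m)%N -> m = (2 * t)%N ->
  (2 <= s)%N -> (s <= 2 ^ (t - 1))%N ->
  partial_spread t E ->
  #|A| = s -> #|B| = s -> #|A :&: B| = 1%N ->
  let f := sum_ind E A in
  let g := sum_ind E B in
  forall (h : vec m), h != 0 ->
  forall f1 f2 : vec m -> 'F_2,
    (f1 = f \/ f1 = g \/ f1 = addF f g) ->
    (f2 = f \/ f2 = g \/ f2 = addF f g) ->
    f1 <> f2 ->
    walsh f1 h + walsh f2 h - walsh (addF f1 f2) 0 != (2 ^ m)%:Z /\
    walsh f1 h + walsh f2 0 - walsh (addF f1 f2) h != (2 ^ m)%:Z.
Proof.
move=> m_ge6 m_eq s_ge2 s_le [E_rank E_disj] cardA cardB cardAB f g h _ f1 f2 f1F f2F f12.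
have t_lt_m : (t < m)%N by lia.
set C := setSD A B.
have fgC : addF f g =1 sum_ind E C := sum_indSD E A B.
have cardAC : #|A :&: C| = s.-1 by rewrite setI_SDl cardsD cardA cardAB subn1.
have cardBC : #|B :&: C| = s.-1 by rewrite /C setSDC setI_SDl cardsD cardB setIC cardAB subn1.
have one_ok : (0 < 1 < 2 ^ t.-1)%N by rewrite -subn1; lia.
have s_ok : (0 < s.-1 < 2 ^ t.-1)%N by rewrite -subn1; lia.
move: f12; case: f1F => [->|[->|->]]; case: f2F => [->|[->|->]] f12; try by case: f12.
all: split; apply: (walsh_addF_sum_ind_neq E_rank E_disj t_lt_m) => //.
all: by rewrite 1?[B :&: A]setIC 1?[C :&: A]setIC 1?[C :&: B]setIC ?cardAB ?cardAC ?cardBC.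
Qed.
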